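(* Let $\mathfrak{g}$ be a finite-dimensional real Lie algebra. A star-product $\star$ on $\mathfrak{g}^*$ satisfying property (P1) is entirely determined by the products $(X)^n\star Y$, where $X,Y$ range over $\mathfrak{g}$ and $n$ over $\mathbb{N}$. That is, if $\star$ and $\star'$ are two star-products on $\mathfrak{g}^*$ both satisfying (P1) and $(X)^n\star Y=(X)^n\star' Y$ for all $X,Y\in\mathfrak{g}$ and all $n\in\mathbb{N}$, then $\star=\star'$.
   Context: Elements of $\mathfrak{g}$ are regarded as linear functions on $\mathfrak{g}^*$, and $(X)^n$ denotes the $n$-th pointwise power of $X$, an element of $S^n(\mathfrak{g})$ (polynomial functions on $\mathfrak{g}^*$). With $[X^i,X^j]=c_k^{ij}X^k$ in a basis $X^1,\dots,X^d$, the linear Poisson bracket is $\{a,b\}=c_k^{ij}X^k\partial_ia\,\partial_jb$. A star-product on $\mathfrak{g}^*$ is an $\mathbb{R}[[\epsilon]]$-bilinear associative product $a\star b=\sum_{j\ge0}\epsilon^j\Pi_j(a,b)$ on $C^\infty(\mathfrak{g}^* )[[\epsilon]]$ with bi-differential $\Pi_j$, $\Pi_0(a,b)=ab$ and $\Pi_1(a,b)-\Pi_1(b,a)=\{a,b\}$. Property (P1): for polynomials $p_n,q_m$ of degrees $n,m$, $p_n\star q_m=p_nq_m+r$ with $r$ a polynomial (coefficients in $\mathbb{R}[[\epsilon]]$) of degree at most $m+n-1$. *)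

From HB Require Import structures.
From mathcomp Require Import all_boot all_order all_algebra.
From mathcomp Require Import all_classical all_reals all_analysis.
Set Implicit Arguments. Unset Strict Implicit. Unset Printing Implicit Defensive.
Import Order.TTheory GRing.Theory Num.Theory.
Import numFieldNormedType.Exports.
Local Open Scope ring_scope.

(* g is a d-dimensional real Lie algebra with basis X^1..X^d and structure
   constants c i j k : [X^i, X^j] = sum_k c i j k X^k.
   g^* is identified with 'rV[R]_d via the dual basis: xi 0 k = xi(X^k). *)

Section Defs.
Variables (R : realType) (d : nat).
Local Notation V := 'rV[R]_d.

Definition is_lie_structure (c : 'I_d -> 'I_d -> 'I_d -> R) : Prop :=
  (forall i j k, c i j k = - c j i k) /\
  (forall i j l m, \sum_(k < d) (c i j k * c k l m + c j l k * c k i m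
                                 + c l i k * c k j m) = 0).

Definition dpart1 (i : 'I_d) (f : V -> R) : V -> R :=
  fun x => derive f x (delta_mx 0 i).

Definition dpart (s : seq 'I_d) (f : V -> R) : V -> R := foldr dpart1 f s.

Definition smooth (f : V -> R) : Prop :=
  forall (s : seq 'I_d) (x : V), differentiable (dpart s f) x.

(* formal power series in epsilon with smooth coefficients *)
Definition epsseries := nat -> V -> R.
Definition smooth_series (a : epsseries) : Prop := forall n, smooth (a n).
Definition cst_series (f : V -> R) : epsseries :=
  fun n => if n == 0%N then f else (fun _ => 0).

Definition bidifferential (Pi : (V -> R) -> (V -> R) -> (V -> R)) : Prop :=
  exists terms : seq (seq 'I_d * seq 'I_d * (V -> R)),
    (forall t, t \in terms -> smooth t.2) /\
    forall a b, smooth a -> smooth b ->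
      Pi a b = fun x => \sum_(t <- terms) t.2 x * dpart t.1.1 a x * dpart t.1.2 b x.

(* the R[[eps]]-bilinear product a * b = sum_j eps^j Pi_j(a,b) *)
Definition star (Pi : nat -> (V -> R) -> (V -> R) -> (V -> R)) (a b : epsseries)
  : epsseries :=
  fun n x => \sum_(j < n.+1) \sum_(i < (n - j).+1) Pi j (a i) (b (n - j - i)%N) x.

Definition poisson (c : 'I_d -> 'I_d -> 'I_d -> R) (a b : V -> R) : V -> R :=
  fun x => \sum_(i < d) \sum_(j < d) \sum_(k < d)
             c i j k * x 0 k * dpart1 i a x * dpart1 j b x.

Definition is_star_product (c : 'I_d -> 'I_d -> 'I_d -> R)
    (Pi : nat -> (V -> R) -> (V -> R) -> (V -> R)) : Prop :=
  [/\ forall j, bidifferential (Pi j),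
      forall a b, smooth a -> smooth b -> Pi 0%N a b = (fun x => a x * b x),
      forall a b, smooth a -> smooth b ->
        forall x, Pi 1%N a b x - Pi 1%N b a x = poisson c a b x
    & forall a b e, smooth_series a -> smooth_series b -> smooth_series e ->
        star Pi (star Pi a b) e = star Pi a (star Pi b e)].

Definition poly_deg_lt (f : V -> R) (K : nat) : Prop :=
  exists mons : seq (R * seq 'I_d),
    (forall m, m \in mons -> (size m.2 < K)%N) /\
    f = fun x => \sum_(m <- mons) m.1 * \prod_(i <- m.2) x 0 i.

(* Property (P1): for p, q polynomials of degree <= n, <= m,
   p * q = pq + r with r of degree <= n + m - 1 (coefficientwise in eps;
   the eps^0 coefficient is pq by Pi_0 = product). *)
Definition P1 (Pi : nat -> (V -> R) -> (V -> R) -> (V -> R)) : Prop :=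
  forall (n m : nat) (p q : V -> R),
    poly_deg_lt p n.+1 -> poly_deg_lt q m.+1 ->
    forall j, (0 < j)%N -> poly_deg_lt (Pi j p q) (n + m).

(* an element X of g as a linear function on g^*, and its n-th power *)
Definition linf (X : V) : V -> R := fun xi => \sum_(k < d) X 0 k * xi 0 k.
Definition powf (X : V) (n : nat) : V -> R := fun xi => linf X xi ^+ n.

End Defs.

From HB Require Import structures.
From mathcomp Require Import all_boot all_order all_algebra.
From mathcomp Require Import all_classical all_reals all_analysis.
From mathcomp Require Import ring zify.
Set Implicit Arguments. Unset Strict Implicit. Unset Printing Implicit Defensive.
Import Order.TTheory GRing.Theory Num.Theory.
Import numFieldNormedType.Exports.
Local Open Scope ring_scope.

(* The coefficients Pi_j of a star product are bidifferential, and a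
   bidifferential operator evaluated at x only sees finite jets of its
   arguments at x; by the symmetry of second derivatives every such jet is
   the jet of a Taylor polynomial.  So it suffices that Pi_j and Pi'_j agree
   on pairs of polynomials p, q, which we show by induction on the degree of
   q.  Polarization shows that the powers (X)^n span all polynomials, so the
   hypothesis settles the case of linear q.  For a monomial q = x_i x^s,
   associativity applied to p, x^s and x_i expresses Pi_j(p, q) through
   Pi_k(-, x_i) and Pi_k(p, r) with deg r < deg q, using (P1) and
   Pi_j(p, 1) = 0 for j > 0. *)

Section PartialDerivative.
Variables (R : realType) (d : nat).
Local Notation V := 'rV[R]_d.
Implicit Types (f g : V -> R) (i j : 'I_d) (k : R).

Definition differentiableT f := forall x, differentiable f x.

Definition coordf i : V -> R := fun x => x 0 i.

Lemma dpart1D i f g : differentiableT f -> differentiableT g ->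
  dpart1 i (f \+ g) = dpart1 i f \+ dpart1 i g.
Proof.
move=> df dg; apply/funext => x; rewrite /dpart1 /=.
by rewrite (@deriveD _ _ _ f g) //; apply: diff_derivable.
Qed.

Lemma dpart1Z i k f : differentiableT f -> dpart1 i (k \*: f) = k \*: dpart1 i f.
Proof.
by move=> df; apply/funext => x; rewrite /dpart1 /= deriveZ //; apply: diff_derivable.
Qed.

Lemma dpart1M i f g : differentiableT f -> differentiableT g ->
  dpart1 i (f \* g) = dpart1 i f \* g \+ f \* dpart1 i g.
Proof.
move=> df dg; apply/funext => x; rewrite /dpart1 /=.
have -> : f \* g = f * g by [].
have [dfx dgx] : derivable f x (delta_mx 0 i) /\ derivable g x (delta_mx 0 i).
  by split; apply: diff_derivable.
by rewrite deriveM // addrC; congr (_ + _) => //; apply: mulrC.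
Qed.

Lemma dpart1_cst i k : dpart1 i (cst k) = cst 0.
Proof. by apply/funext => x; rewrite /dpart1 derive_cst. Qed.

Lemma dpart1_coordf i j : dpart1 i (coordf j) = cst (j == i)%:R.
Proof.
apply/funext => x; rewrite /dpart1 /=.
have lin : linear (coordf j) by move=> a u v; rewrite /coordf !mxE.
pose cL : {linear V -> R} := HB.pack (coordf j) (GRing.isLinear.Build _ _ _ _ _ lin).
have -> : coordf j = cL by [].
rewrite deriveE; last by apply: linear_differentiable; apply: coord_continuous.
by rewrite diff_lin /= /coordf ?mxE ?eqxx //; apply: coord_continuous.
Qed.

Lemma differentiableTD f g :
  differentiableT f -> differentiableT g -> differentiableT (f \+ g).
Proof. by move=> df dg x; apply: differentiableD. Qed.

Lemma differentiableTZ k f : differentiableT f -> differentiableT (k \*: f).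
Proof. by move=> df x; apply: differentiableZ. Qed.

Lemma differentiableTM f g :
  differentiableT f -> differentiableT g -> differentiableT (f \* g).
Proof. by move=> df dg x; apply: differentiableM. Qed.

Lemma differentiableT_cst k : differentiableT (cst k : V -> R).
Proof. by move=> x; apply: differentiable_cst. Qed.

Lemma differentiableT_coordf i : differentiableT (coordf i).
Proof. by move=> x; apply: differentiable_coord. Qed.

End PartialDerivative.

Arguments coordf {R d} i.

Section Smooth.
Variables (R : realType) (d : nat).
Local Notation V := 'rV[R]_d.
Implicit Types (f g : V -> R) (s : seq 'I_d) (k : R).

Lemma dpart_cat s1 s2 f : dpart (s1 ++ s2) f = dpart s1 (dpart s2 f).
Proof. exact: foldr_cat. Qed.

Lemma smooth_differentiableT f : smooth f -> differentiableT f.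
Proof. by move=> sf; apply: (sf [::]). Qed.

Lemma smooth_dpart s f : smooth f -> smooth (dpart s f).
Proof. by move=> sf s' x; rewrite -dpart_cat; apply: sf. Qed.

Lemma dpartD s f g : smooth f -> smooth g -> dpart s (f \+ g) = dpart s f \+ dpart s g.
Proof.
move=> sf sg; elim: s => [//|i s /= ->].
by rewrite dpart1D //; apply/smooth_differentiableT/smooth_dpart.
Qed.

Lemma dpartZ s k f : smooth f -> dpart s (k \*: f) = k \*: dpart s f.
Proof.
move=> sf; elim: s => [//|i s /= ->].
by rewrite dpart1Z //; apply/smooth_differentiableT/smooth_dpart.
Qed.

Lemma dpart_cst0 s : dpart s (cst 0) = cst 0 :> (V -> R).
Proof. by elim: s => [//|i s /= ->]; rewrite dpart1_cst. Qed.

Lemma smoothD f g : smooth f -> smooth g -> smooth (f \+ g).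
Proof.
move=> sf sg s x; rewrite dpartD //.
by apply: differentiableTD; apply/smooth_differentiableT/smooth_dpart.
Qed.

Lemma smoothZ k f : smooth f -> smooth (k \*: f).
Proof.
move=> sf s x; rewrite dpartZ //.
by apply: differentiableTZ; apply/smooth_differentiableT/smooth_dpart.
Qed.

End Smooth.

Section Polynomial.
Variables (R : realType) (d : nat).
Local Notation V := 'rV[R]_d.
Implicit Types (f g : V -> R) (s : seq 'I_d) (k : R) (K : nat).

Definition monomial s : V -> R := fun x => \prod_(i <- s) x 0 i.

Definition polyf (mons : seq (R * seq 'I_d)) : V -> R :=
  fun x => \sum_(m <- mons) m.1 * \prod_(i <- m.2) x 0 i.

Definition is_poly f := exists K, poly_deg_lt f K.

Lemma monomial_nil : monomial [::] = cst 1.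
Proof. by apply/funext => x; rewrite /monomial big_nil. Qed.

Lemma monomial_cons i s : monomial (i :: s) = coordf i \* monomial s.
Proof. by apply/funext => x; rewrite /monomial big_cons. Qed.

Lemma polyf_nil : polyf [::] = cst 0.
Proof. by apply/funext => x; rewrite /polyf big_nil. Qed.

Lemma polyf_cons m mons : polyf (m :: mons) = m.1 \*: monomial m.2 \+ polyf mons.
Proof. by apply/funext => x; rewrite /polyf big_cons. Qed.

Lemma poly_deg_lt_leq f K K' : (K <= K')%N -> poly_deg_lt f K -> poly_deg_lt f K'.
Proof.
move=> KK' [mons [smons ->]]; exists mons; split=> // m /smons.
by move/leq_trans; apply.
Qed.

Lemma poly_deg_lt0 f : poly_deg_lt f 0 -> f = cst 0.
Proof.
by move=> [[|m mons] [smons ->]]; [apply: polyf_nil | have := smons m (mem_head _ _)].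
Qed.

Lemma poly_deg_ltD f g K : poly_deg_lt f K -> poly_deg_lt g K -> poly_deg_lt (f \+ g) K.
Proof.
move=> [m1 [s1 ->]] [m2 [s2 ->]]; exists (m1 ++ m2); split.
  by move=> m; rewrite mem_cat => /orP [/s1|/s2].
by apply/funext => x; rewrite /= big_cat.
Qed.

Lemma poly_deg_ltZ k f K : poly_deg_lt f K -> poly_deg_lt (k \*: f) K.
Proof.
move=> [mons [smons ->]]; exists [seq (k * m.1, m.2) | m <- mons]; split.
  by move=> m /mapP [m' /smons ? ->].
apply/funext => x; rewrite /= big_map scaler_sumr.
by apply: eq_bigr => m _; apply: mulrA.
Qed.

Lemma poly_deg_ltM f g K1 K2 : poly_deg_lt f K1 -> poly_deg_lt g K2 ->
  poly_deg_lt (f \* g) (K1 + K2).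
Proof.
move=> [m1 [s1 ->]] [m2 [s2 ->]].
exists [seq (a.1 * b.1, a.2 ++ b.2) | a <- m1, b <- m2]; split.
  move=> m /allpairsP [[a b] /= [/s1 ha /s2 hb ->]] /=.
  by rewrite size_cat -addSn leq_add // ltnW.
apply/funext => x; rewrite /= big_allpairs_dep /= big_distrl /=.
apply: eq_bigr => a _; rewrite big_distrr /=; apply: eq_bigr => b _.
by rewrite big_cat /= mulrACA.
Qed.

Lemma poly_deg_lt_monomial s : poly_deg_lt (monomial s) (size s).+1.
Proof.
exists [:: (1, s)]; split; first by move=> m; rewrite inE => /eqP ->.
by apply/funext => x; rewrite big_seq1 mul1r.
Qed.

Lemma poly_deg_lt_cst k : poly_deg_lt (cst k : V -> R) 1.
Proof.
exists [:: (k, [::])]; split; first by move=> m; rewrite inE => /eqP ->.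
by apply/funext => x; rewrite big_seq1 big_nil mulr1.
Qed.

Lemma poly_deg_lt_coordf i : poly_deg_lt (coordf i : V -> R) 2.
Proof.
have -> : coordf i = monomial [:: i] by apply/funext => x; rewrite /monomial big_seq1.
exact: poly_deg_lt_monomial.
Qed.

Lemma is_polyD f g : is_poly f -> is_poly g -> is_poly (f \+ g).
Proof.
move=> [K1 pf] [K2 pg]; exists (maxn K1 K2).
by apply: poly_deg_ltD; [apply: poly_deg_lt_leq _ pf | apply: poly_deg_lt_leq _ pg];
  rewrite ?leq_maxl ?leq_maxr.
Qed.

Lemma is_polyZ k f : is_poly f -> is_poly (k \*: f).
Proof. by move=> [K pf]; exists K; apply: poly_deg_ltZ. Qed.

Lemma is_polyM f g : is_poly f -> is_poly g -> is_poly (f \* g).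
Proof. by move=> [K1 pf] [K2 pg]; exists (K1 + K2)%N; apply: poly_deg_ltM. Qed.

Lemma is_poly_cst k : is_poly (cst k : V -> R).
Proof. by exists 1%N; apply: poly_deg_lt_cst. Qed.

Lemma is_poly_monomial s : is_poly (monomial s).
Proof. by exists (size s).+1; apply: poly_deg_lt_monomial. Qed.

Lemma is_poly_coordf i : is_poly (coordf i : V -> R).
Proof. by exists 2%N; apply: poly_deg_lt_coordf. Qed.

Lemma is_poly_polyf mons : is_poly (polyf mons).
Proof.
elim: mons => [|m mons IH]; first by rewrite polyf_nil; apply: is_poly_cst.
by rewrite polyf_cons; apply/is_polyD/IH/is_polyZ/is_poly_monomial.
Qed.

Lemma poly_deg_lt_ind (P : (V -> R) -> Prop) K :
    P (cst 0) ->
    (forall f g, is_poly f -> is_poly g -> P f -> P g -> P (f \+ g)) ->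
    (forall k f, is_poly f -> P f -> P (k \*: f)) ->
    (forall s, (size s < K)%N -> P (monomial s)) ->
  forall f, poly_deg_lt f K -> P f.
Proof.
move=> P0 PD PZ Pmon f [mons [smons ->]]; rewrite -/(polyf mons).
elim: mons smons => [|m mons IH] smons; first by rewrite polyf_nil.
have Pm : P (m.1 \*: monomial m.2).
  by apply/PZ/Pmon/smons; rewrite ?mem_head //; apply: is_poly_monomial.
rewrite polyf_cons; apply: PD Pm (IH _) => //.
- exact/is_polyZ/is_poly_monomial.
- exact: is_poly_polyf.
- by move=> m' m'mons; apply: smons; rewrite inE m'mons orbT.
Qed.

Lemma is_poly_ind (P : (V -> R) -> Prop) :
    P (cst 0) ->
    (forall f g, is_poly f -> is_poly g -> P f -> P g -> P (f \+ g)) ->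
    (forall k f, is_poly f -> P f -> P (k \*: f)) ->
    (forall s, P (monomial s)) ->
  forall f, is_poly f -> P f.
Proof. by move=> P0 PD PZ Pmon f [K]; apply: poly_deg_lt_ind. Qed.

Lemma differentiableT_poly f : is_poly f -> differentiableT f.
Proof.
move: f; apply: is_poly_ind => [|f1 f2 _ _|k f1 _|s];
  auto using differentiableT_cst, differentiableTD, differentiableTZ.
elim: s => [|i s IH]; rewrite ?monomial_nil ?monomial_cons.
  exact: differentiableT_cst.
exact/differentiableTM/IH/differentiableT_coordf.
Qed.

Lemma is_poly_dpart1 i f : is_poly f -> is_poly (dpart1 i f).
Proof.
move: f; apply: is_poly_ind => [|f1 f2 p1 p2 IH1 IH2|k f1 p1 IH1|s].
- by rewrite dpart1_cst; apply: is_poly_cst.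
- by rewrite dpart1D; [apply: is_polyD | apply: differentiableT_poly..].
- by rewrite dpart1Z; [apply: is_polyZ | apply: differentiableT_poly].
elim: s => [|j s IH]; first by rewrite monomial_nil dpart1_cst; apply: is_poly_cst.
rewrite monomial_cons dpart1M; last exact/differentiableT_poly/is_poly_monomial.
  rewrite dpart1_coordf; apply/is_polyD/is_polyM/IH/is_poly_coordf.
  exact/is_polyM/is_poly_monomial/is_poly_cst.
exact: differentiableT_coordf.
Qed.

Lemma is_poly_dpart s f : is_poly f -> is_poly (dpart s f).
Proof. by move=> pf; elim: s => [//|i s IH]; apply: is_poly_dpart1. Qed.

Lemma smooth_poly f : is_poly f -> smooth f.
Proof. by move=> pf s; apply/differentiableT_poly/is_poly_dpart. Qed.

Lemma smooth_cst k : smooth (cst k : V -> R).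
Proof. exact/smooth_poly/is_poly_cst. Qed.

Lemma is_poly_linf (X : V) : is_poly (linf X).
Proof.
have -> : linf X = polyf [seq (X 0 l, [:: l]) | l <- index_enum 'I_d].
  by apply/funext => x; rewrite /polyf big_map; apply: eq_bigr => l _; rewrite big_seq1.
exact: is_poly_polyf.
Qed.

Lemma linf_delta i : linf (delta_mx 0 i) = coordf i :> (V -> R).
Proof.
apply/funext => x; rewrite /linf (bigD1 i) //= big1 ?addr0.
  by rewrite mxE !eqxx mul1r.
by move=> k /negbTE ne; rewrite mxE ne andbF mul0r.
Qed.

Lemma powfS (X : V) n : powf X n.+1 = linf X \* powf X n.
Proof. by apply/funext => x; rewrite /powf /= exprS. Qed.

Lemma is_poly_powf (X : V) n : is_poly (powf X n).
Proof.
elim: n => [|n IH]; last by rewrite powfS; apply/is_polyM/IH/is_poly_linf.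
have -> : powf X 0 = cst 1 by apply/funext => x; rewrite /powf expr0.
exact: is_poly_cst.
Qed.

Lemma smooth_sum (I : Type) (T : seq I) (F : I -> V -> R) :
  (forall t, smooth (F t)) -> smooth (\sum_(t <- T) F t).
Proof.
move=> sF; elim: T => [|t T IH]; first by rewrite big_nil; apply: smooth_cst.
by rewrite big_cons; apply: smoothD.
Qed.

Lemma is_poly_sum (I : Type) (T : seq I) (F : I -> V -> R) :
  (forall t, is_poly (F t)) -> is_poly (\sum_(t <- T) F t).
Proof.
move=> pF; elim: T => [|t T IH]; first by rewrite big_nil; apply: is_poly_cst.
by rewrite big_cons; apply: is_polyD.
Qed.

Lemma dpart_sum (I : Type) (T : seq I) (F : I -> V -> R) u :
  (forall t, smooth (F t)) ->
  dpart u (\sum_(t <- T) F t) = \sum_(t <- T) dpart u (F t).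
Proof.
move=> sF; elim: T => [|t T IH]; first by rewrite !big_nil dpart_cst0.
by rewrite !big_cons -IH; apply: dpartD => //; apply: smooth_sum.
Qed.

End Polynomial.

Arguments monomial {R d} s.
Arguments poly_deg_lt_cst {R d} k.
Arguments poly_deg_lt_monomial {R d} s.
Arguments poly_deg_lt_coordf {R d} i.
Arguments is_poly_monomial {R d} s.
Arguments is_poly_coordf {R d} i.
Arguments is_poly_cst {R d} k.
Arguments smooth_cst {R d} k.

Section Bidifferential.
Variables (R : realType) (d : nat).
Local Notation V := 'rV[R]_d.
Implicit Types (a b f : V -> R) (k : R).

Variable P : (V -> R) -> (V -> R) -> (V -> R).
Hypothesis bidiffP : bidifferential P.

Lemma bidiff0l f : smooth f -> P (cst 0) f = cst 0.
Proof.
move=> sf; have s0 := @smooth_cst R d 0; have [T [_ ->]] // := bidiffP.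
by apply/funext => x; rewrite big1 // => t _; rewrite dpart_cst0 mulr0 mul0r.
Qed.

Lemma bidiff0r f : smooth f -> P f (cst 0) = cst 0.
Proof.
move=> sf; have s0 := @smooth_cst R d 0; have [T [_ ->]] // := bidiffP.
by apply/funext => x; rewrite big1 // => t _; rewrite dpart_cst0 mulr0.
Qed.

Lemma bidiffDl a1 a2 b : smooth a1 -> smooth a2 -> smooth b ->
  P (a1 \+ a2) b = P a1 b \+ P a2 b.
Proof.
move=> s1 s2 sb; have s12 := smoothD s1 s2; have [T [_ PT]] := bidiffP; rewrite !PT //.
apply/funext => x; rewrite /= -big_split; apply: eq_bigr => t _.
by rewrite dpartD //= mulrDr mulrDl.
Qed.

Lemma bidiffDr a b1 b2 : smooth a -> smooth b1 -> smooth b2 ->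
  P a (b1 \+ b2) = P a b1 \+ P a b2.
Proof.
move=> sa s1 s2; have s12 := smoothD s1 s2; have [T [_ PT]] := bidiffP; rewrite !PT //.
apply/funext => x; rewrite /= -big_split; apply: eq_bigr => t _.
by rewrite dpartD //= mulrDr.
Qed.

Lemma bidiffZl k a b : smooth a -> smooth b -> P (k \*: a) b = k \*: P a b.
Proof.
move=> sa sb; have ska := smoothZ k sa; have [T [_ PT]] := bidiffP; rewrite !PT //.
apply/funext => x; rewrite /= scaler_sumr; apply: eq_bigr => t _.
by rewrite dpartZ //= scalerAl scalerAr.
Qed.

Lemma bidiffZr k a b : smooth a -> smooth b -> P a (k \*: b) = k \*: P a b.
Proof.
move=> sa sb; have skb := smoothZ k sb; have [T [_ PT]] := bidiffP; rewrite !PT //.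
apply/funext => x; rewrite /= scaler_sumr; apply: eq_bigr => t _.
by rewrite dpartZ //= scalerAr.
Qed.

End Bidifferential.

Section StarCoefficients.
Variables (R : realType) (d : nat).
Local Notation V := 'rV[R]_d.
Implicit Types (a b e f : V -> R).

Variable Pi : nat -> (V -> R) -> (V -> R) -> (V -> R).
Hypothesis bidiffPi : forall j, bidifferential (Pi j).

Lemma smooth_cst_series f : smooth f -> smooth_series (cst_series f).
Proof. by move=> sf [|n] //; apply/smooth_poly/is_poly_cst. Qed.

Lemma star_cstl a (B : epsseries R d) n x : smooth_series B ->
  star Pi (cst_series a) B n x = \sum_(j < n.+1) Pi j a (B (n - j)%N) x.
Proof.
move=> sB; apply: eq_bigr => j _.
by rewrite big_ord_recl /= subn0 big1 ?addr0 // => i _; rewrite bidiff0l.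
Qed.

Lemma star_cstr (A : epsseries R d) b n x : smooth_series A ->
  star Pi A (cst_series b) n x = \sum_(j < n.+1) Pi j (A (n - j)%N) b x.
Proof.
move=> sA; apply: eq_bigr => j _.
rewrite big_ord_recr /= subnn big1 ?add0r // => i _.
by rewrite /cst_series subn_eq0 leqNgt ltn_ord /= bidiff0r.
Qed.

Lemma star_cst a b : smooth a -> smooth b ->
  star Pi (cst_series a) (cst_series b) = fun n => Pi n a b.
Proof.
move=> sa sb; apply/funext => n; apply/funext => x.
rewrite star_cstl; last exact: smooth_cst_series.
rewrite big_ord_recr /= subnn big1 ?add0r // => j _.
by rewrite /cst_series subn_eq0 leqNgt ltn_ord /= bidiff0r.
Qed.

Lemma star_assoc_coef a b e :
    (forall A B E, smooth_series A -> smooth_series B -> smooth_series E ->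
      star Pi (star Pi A B) E = star Pi A (star Pi B E)) ->
    smooth a -> smooth b -> smooth e ->
    (forall l, smooth (Pi l a b)) -> (forall l, smooth (Pi l b e)) ->
  forall n x, \sum_(k < n.+1) Pi k (Pi (n - k)%N a b) e x
            = \sum_(k < n.+1) Pi k a (Pi (n - k)%N b e) x.
Proof.
move=> assoc sa sb se sab sbe n x.
have := assoc _ _ _ (smooth_cst_series sa) (smooth_cst_series sb) (smooth_cst_series se).
by rewrite !star_cst // => /(congr1 (fun F => F n x)); rewrite star_cstr // star_cstl.
Qed.

End StarCoefficients.

Section PowerSpan.
Variables (R : realType) (d : nat).
Local Notation V := 'rV[R]_d.

Variable Q : (V -> R) -> Prop.
Hypothesis QD : forall f g, Q f -> Q g -> Q (f \+ g).
Hypothesis QZ : forall k f, Q f -> Q (k \*: f).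
Hypothesis Q_powf : forall X n, Q (powf X n).

Lemma Q0 : Q (cst 0).
Proof.
have -> : cst 0 = 0 \*: powf (0 : V) 0 by apply/funext => x; rewrite /= scale0r.
exact: QZ.
Qed.

Lemma Q_sum n (F : 'I_n -> V -> R) : (forall l, Q (F l)) ->
  Q (fun x => \sum_(l < n) F l x).
Proof.
elim: n F => [|n IH] F QF.
  have -> : (fun x => \sum_(l < 0) F l x) = cst 0 by apply/funext => x; rewrite big_ord0.
  exact: Q0.
have -> : (fun x => \sum_(l < n.+1) F l x) =
    (fun x => \sum_(l < n) F (widen_ord (leqnSn n) l) x) \+ F ord_max.
  by apply/funext => x; rewrite big_ord_recr.
by apply: QD; [apply: IH | ].
Qed.

(* Inverting the Vandermonde matrix of the nodes 0, 1, ..., b expresses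
   each v i as a linear combination of the sums at t = 0, 1, ..., b. *)
Lemma Q_coef b (v : nat -> V -> R) :
    (forall t : R, Q (fun x => \sum_(i < b.+1) t ^+ i * v i x)) ->
  forall i, (i < b.+1)%N -> Q (v i).
Proof.
move=> Qt i ib; set i' := Ordinal ib.
pose A := Vandermonde b.+1 (\row_(j < b.+1) (j%:R : R)).
have uA : A \in unitmx.
  rewrite unitmxE unitfE det_Vandermonde; apply/prodf_neq0 => k _.
  apply/prodf_neq0 => l kl; rewrite !mxE subr_eq0 eqr_nat.
  by rewrite eq_sym neq_ltn kl.
have -> : v i = fun x => \sum_(l < b.+1)
    invmx A l i' * (\sum_(j < b.+1) (l%:R : R) ^+ j * v j x).
  apply/funext => x.
  transitivity (\sum_(j < b.+1) (A *m invmx A) j i' * v j x).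
    rewrite mulmxV // (bigD1 i') //= big1 ?addr0; first by rewrite mxE eqxx mul1r.
    by move=> k /negbTE ne; rewrite mxE ne mul0r.
  under eq_bigr do rewrite mxE big_distrl.
  rewrite exchange_big /=; apply: eq_bigr => l _; rewrite big_distrr /=.
  by apply: eq_bigr => k _; rewrite /A !mxE mulrCA mulrA.
by apply: Q_sum => l; apply: QZ.
Qed.

Lemma linfD (Z X : V) t : linf (Z + t *: X) = fun x => linf Z x + t * linf X x.
Proof.
apply/funext => x; rewrite /linf big_distrr -big_split /=; apply: eq_bigr => k _.
by rewrite !mxE mulrDl mulrA.
Qed.

(* Polarization: linf X * linf Z ^+ k is, up to the factor k.+1, the
   coefficient of t in linf (Z + t X) ^+ k.+1, which Q_coef extracts. *)
Lemma Q_prod_linf (L : seq V) (Z : V) k :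
  Q (fun x => (\prod_(X <- L) linf X x) * linf Z x ^+ k).
Proof.
elim: L Z k => [|X L IH] Z k.
  have -> : (fun x => (\prod_(X <- [::]) linf X x) * linf Z x ^+ k) = powf Z k.
    by apply/funext => x; rewrite big_nil mul1r.
  exact: Q_powf.
pose v i x := (\prod_(X <- L) linf X x) *
   (linf Z x ^+ (k.+1 - i) * linf X x ^+ i *+ 'C(k.+1, i)).
have Qv : forall t : R, Q (fun x => \sum_(i < k.+2) t ^+ i * v i x).
  move=> t; have -> : (fun x => \sum_(i < k.+2) t ^+ i * v i x) =
      (fun x => (\prod_(X <- L) linf X x) * linf (Z + t *: X) x ^+ k.+1).
    apply/funext => x; rewrite /v linfD exprDn mulr_sumr; apply: eq_bigr => i _.
    by rewrite exprMn !mulrnAr; congr (_ *+ _); ring.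
  exact: IH.
have := QZ (k.+1%:R)^-1 (Q_coef Qv (isT : (1 < k.+2)%N)).
congr Q; apply/funext => x.
rewrite /= /v big_cons bin1 subSS subn0 expr1 mulrnAr -[(_ * _) *+ _]scaler_nat.
by rewrite scalerA mulVf ?pnatr_eq0 // scale1r; ring.
Qed.

Lemma Q_poly f : is_poly f -> Q f.
Proof.
move: f; apply: is_poly_ind => [|f g _ _|k f _|s]; auto using Q0.
have := Q_prod_linf [seq delta_mx 0 i | i <- s] 0 0.
congr Q; apply/funext => x; rewrite expr0 mulr1 big_map; apply: eq_bigr => i _.
by rewrite linf_delta.
Qed.

End PowerSpan.

Section UnitalAssociativeProduct.
Variables (R : realType) (d : nat).
Local Notation V := 'rV[R]_d.
Implicit Types (a b e p : V -> R).

Variable Pi : nat -> (V -> R) -> (V -> R) -> (V -> R).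
Hypothesis bidiffPi : forall j, bidifferential (Pi j).
Hypothesis Pi0 : forall a b, smooth a -> smooth b -> Pi 0%N a b = a \* b.
Hypothesis assocPi : forall A B E : epsseries R d,
  smooth_series A -> smooth_series B -> smooth_series E ->
  star Pi (star Pi A B) E = star Pi A (star Pi B E).
Hypothesis P1Pi : P1 Pi.

Lemma is_poly_Pi j a b : is_poly a -> is_poly b -> is_poly (Pi j a b).
Proof.
move=> pa pb; have [sa sb] := (smooth_poly pa, smooth_poly pb).
case: j => [|j]; first by rewrite Pi0 //; apply: is_polyM.
case: pa pb => -[/poly_deg_lt0 -> _|n pa].
  by rewrite bidiff0l //; apply: is_poly_cst.
case=> -[/poly_deg_lt0 ->|m pb]; first by rewrite bidiff0r //; apply: is_poly_cst.
by exists (n + m)%N; apply: P1Pi.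
Qed.

Lemma star_assoc_coef_poly a b e : is_poly a -> is_poly b -> is_poly e ->
  forall n x, \sum_(k < n.+1) Pi k (Pi (n - k)%N a b) e x
            = \sum_(k < n.+1) Pi k a (Pi (n - k)%N b e) x.
Proof.
move=> pa pb pe; have sPi l f g : is_poly f -> is_poly g -> smooth (Pi l f g).
  by move=> pf pg; apply/smooth_poly/is_poly_Pi.
apply: star_assoc_coef => //; try exact: smooth_poly.
- by move=> l; apply: sPi.
- by move=> l; apply: sPi.
Qed.

Lemma Pi_cst1 j p : is_poly p -> Pi j p (cst 1) = if j == 0%N then p else cst 0.
Proof.
move=> pp; have [sp s1] := (smooth_poly pp, @smooth_cst R d 1).
have Pi0_cst1 q : smooth q -> Pi 0 q (cst 1) = q.
  by move=> sq; rewrite Pi0 //; apply/funext => x; rewrite /= mulr1.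
have Pi_cst11 l : (0 < l)%N -> Pi l (cst 1) (cst 1) = cst 0.
  case: l => // l _; apply/poly_deg_lt0/(P1Pi (n := 0) (m := 0)) => //;
    exact: poly_deg_lt_cst.
case: j => [|j] /=; first exact: Pi0_cst1.
(* Associativity on (p, 1, 1): Pi_(j+1)(p, 1) occurs twice on the left and
   once on the right, all other terms vanish by induction and (P1). *)
elim/ltn_ind: j => j IH; apply/funext => x.
have sPj : smooth (Pi j.+1 p (cst 1)).
  by apply: smooth_poly; apply: is_poly_Pi => //; apply: is_poly_cst.
have := star_assoc_coef_poly pp (is_poly_cst 1) (is_poly_cst 1) j.+1 x.
rewrite big_ord_recr /= subnn Pi0_cst1 // big_ord_recl /= subn0 Pi0_cst1 //.
rewrite big1 => [|k _]; last first.
  have kj := ltn_ord k.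
  by rewrite /bump /= add1n subSS -(subnSK kj) IH ?(bidiff0l (bidiffPi _)) //; lia.
rewrite big_ord_recr /= subnn Pi0_cst1 // big1 => [|k _]; last first.
  by rewrite Pi_cst11 ?subn_gt0 // (bidiff0r (bidiffPi _)).
by rewrite addr0 add0r => /eqP; rewrite -subr_eq0 addrK => /eqP.
Qed.

(* Associativity applied to p, monomial s and coordf i, using
   monomial (i :: s) = Pi 0 (monomial s) (coordf i). *)
Lemma Pi_monomial_cons j p s i x : is_poly p ->
  Pi j p (monomial (i :: s)) x =
    \sum_(k < j.+1) Pi k (Pi (j - k) p (monomial s)) (coordf i) x
  - \sum_(k < j) Pi k p (Pi (j - k) (monomial s) (coordf i)) x.
Proof.
move=> pp; have := star_assoc_coef_poly pp (is_poly_monomial s) (is_poly_coordf i) j x.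
have -> : monomial (i :: s) = Pi 0 (monomial s) (coordf i).
  rewrite Pi0; [|exact/smooth_poly/is_poly_monomial | exact/smooth_poly/is_poly_coordf].
  by rewrite monomial_cons; apply/funext => y; rewrite /= mulrC.
by rewrite [in RHS]big_ord_recr /= subnn => ->; rewrite addrC addrK.
Qed.

End UnitalAssociativeProduct.

Section AgreementOnPolynomials.
Variables (R : realType) (d : nat).
Local Notation V := 'rV[R]_d.
Implicit Types (p q : V -> R).

Variables Pi Pi' : nat -> (V -> R) -> (V -> R) -> (V -> R).
Hypothesis bidiffPi : forall j, bidifferential (Pi j).
Hypothesis Pi0 : forall a b, smooth a -> smooth b -> Pi 0%N a b = a \* b.
Hypothesis assocPi : forall A B E : epsseries R d,
  smooth_series A -> smooth_series B -> smooth_series E ->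
  star Pi (star Pi A B) E = star Pi A (star Pi B E).
Hypothesis P1Pi : P1 Pi.
Hypothesis bidiffPi' : forall j, bidifferential (Pi' j).
Hypothesis Pi0' : forall a b, smooth a -> smooth b -> Pi' 0%N a b = a \* b.
Hypothesis assocPi' : forall A B E : epsseries R d,
  smooth_series A -> smooth_series B -> smooth_series E ->
  star Pi' (star Pi' A B) E = star Pi' A (star Pi' B E).
Hypothesis P1Pi' : P1 Pi'.
Hypothesis eq_powf_linf : forall (X Y : V) n,
  star Pi (cst_series (powf X n)) (cst_series (linf Y))
  = star Pi' (cst_series (powf X n)) (cst_series (linf Y)).

Lemma Pi_poly_linf_eq p (Y : V) j : is_poly p -> Pi j p (linf Y) = Pi' j p (linf Y).
Proof.
have sY := smooth_poly (is_poly_linf Y).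
pose Q f := smooth f /\ Pi j f (linf Y) = Pi' j f (linf Y).
suff /(_ p) : forall f, is_poly f -> Q f by move=> Qp /Qp[].
apply: Q_poly => [f g [sf Qf] [sg Qg]|k f [sf Qf]|X n].
- by split; [apply: smoothD | rewrite !bidiffDl // Qf Qg].
- by split; [apply: smoothZ | rewrite !bidiffZl // Qf].
have sX := smooth_poly (is_poly_powf X n); split=> //.
by have := eq_powf_linf X Y n; rewrite !star_cst // => /(congr1 (fun F => F j)).
Qed.

(* In the monomial case the factor [coordf i] is linear, so Pi_poly_linf_eq
   applies, and (P1) bounds the degree of Pi_(j-k)(monomial s, coordf i). *)
Lemma Pi_poly_eq_deg K q : poly_deg_lt q K ->
  forall p, is_poly p -> forall j, Pi j p q = Pi' j p q.
Proof.
elim: K q => [q /poly_deg_lt0 -> p pp j|K IH].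
  by have sp := smooth_poly pp; rewrite (bidiff0r (bidiffPi _)) ?(bidiff0r (bidiffPi' _)).
apply: poly_deg_lt_ind => [p pp j|q1 q2 pq1 pq2 IH1 IH2 p pp j|k q pq IHq p pp j|].
- by have sp := smooth_poly pp; rewrite (bidiff0r (bidiffPi _)) ?(bidiff0r (bidiffPi' _)).
- have [[sp s1] s2] := (smooth_poly pp, smooth_poly pq1, smooth_poly pq2).
  by rewrite (bidiffDr (bidiffPi _)) ?(bidiffDr (bidiffPi' _)) // IH1 ?IH2.
- have [sp sq] := (smooth_poly pp, smooth_poly pq).
  by rewrite (bidiffZr (bidiffPi _)) ?(bidiffZr (bidiffPi' _)) // IHq.
case=> [_ p pp j|i s]; first by rewrite monomial_nil !Pi_cst1.
rewrite ltnS => sK p pp j; apply/funext => x.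
have ps : poly_deg_lt (monomial s : V -> R) K.
  exact: poly_deg_lt_leq sK (poly_deg_lt_monomial s).
rewrite !Pi_monomial_cons //; congr (_ - _); apply: eq_bigr => k _.
  rewrite (IH _ ps) // -linf_delta Pi_poly_linf_eq //.
  exact: (is_poly_Pi bidiffPi' Pi0' P1Pi') (is_poly_monomial s).
rewrite -linf_delta Pi_poly_linf_eq; last exact: is_poly_monomial.
rewrite linf_delta (IH _ _ p pp) //.
have jk : (0 < j - k)%N by rewrite subn_gt0.
apply: poly_deg_lt_leq _ (P1Pi' (poly_deg_lt_monomial s) (poly_deg_lt_coordf i) jk).
by rewrite addn1.
Qed.

Lemma Pi_poly_eq j p q : is_poly p -> is_poly q -> Pi j p q = Pi' j p q.
Proof. by move=> pp [K pq]; apply: Pi_poly_eq_deg pq p pp j. Qed.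

End AgreementOnPolynomials.

Lemma MVT_open (R : realType) (f df : R -> R) (b : R) : 0 < b ->
    (forall s : R, is_derive s (1 : R) f (df s)) ->
  exists c, [/\ 0 < c, c < b & f b - f 0 = df c * b].
Proof.
move=> b0 fdf; have fd : {in `[0, b], forall x, derivable f x 1}.
  by move=> s _; have [] := fdf s.
have [c] := MVT b0 (fun s _ => fdf s) (derivable_within_continuous fd).
by rewrite in_itv /= subr0 => /andP[c0 cb] E; exists c.
Qed.

Lemma dist_lt_split (R : numFieldType) (a b p q e : R) :
  `|a - p| < e / 2 -> `|b - q| < e / 2 -> p = q -> `|a - b| < e.
Proof.
move=> ap bq pq; have -> : a - b = (a - p) - (b - q) by rewrite pq; ring.
by rewrite (splitr e); apply: le_lt_trans (ler_normB _ _) (ltrD ap bq).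
Qed.

Section Schwarz.
Variables (R : realType) (d : nat).
Local Notation V := 'rV[R]_d.
Implicit Types (g h : V -> R).

Lemma is_derive_line h (v y : V) (s : R) : differentiableT h ->
  is_derive s (1 : R) (fun t => h (t *: v + y)) ('D_v h (s *: v + y)).
Proof.
move=> dh; have quotE : (fun t : R =>
      t^-1 *: (((fun t => h (t *: v + y)) \o shift s) (t *: 1) - h (s *: v + y)))
  = (fun t : R => t^-1 *: ((h \o shift (s *: v + y)) (t *: v) - h (s *: v + y))).
  apply/funext => t /=; congr (_ *: (h _ - _)).
  by rewrite scalerDl /GRing.scale /= mulr1 addrA.
have dv : derivable h (s *: v + y) v by apply: diff_derivable.
by apply: DeriveDef; rewrite /derivable /derive quotE.
Qed.

Lemma MVT_line h (v y : V) (b : R) : differentiableT h -> 0 < b ->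
  exists c, [/\ 0 < c, c < b & h (b *: v + y) - h y = 'D_v h (c *: v + y) * b].
Proof.
move=> dh b0; have := MVT_open b0 (is_derive_line v y ^~ dh).
by rewrite scale0r add0r.
Qed.

Lemma second_difference g (i j : 'I_d) (x : V) (b : R) : smooth g -> 0 < b ->
  let ei : V := delta_mx 0 i in let ej : V := delta_mx 0 j in
  exists s t, [/\ 0 < s, s < b, 0 < t, t < b &
   g (b *: ei + (b *: ej + x)) - g (b *: ei + x) - g (b *: ej + x) + g x
   = dpart1 j (dpart1 i g) (t *: ej + (s *: ei + x)) * b * b].
Proof.
move=> sg b0 ei ej.
have dg := smooth_differentiableT sg.
have dgi := smooth_differentiableT (smooth_dpart [:: i] sg).
pose phi s := g (s *: ei + (b *: ej + x)) - g (s *: ei + x).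
have phi' s : is_derive s (1 : R) phi
    (dpart1 i g (s *: ei + (b *: ej + x)) - dpart1 i g (s *: ei + x)).
  by apply: is_deriveB; apply: is_derive_line.
have [s [s0 sb E1]] := MVT_open b0 phi'.
have [t [t0 tb E2]] := MVT_line ej (s *: ei + x) dgi b0.
exists s, t; split => //; move: E1; rewrite /phi !scale0r !add0r => E1.
transitivity ((g (b *: ei + (b *: ej + x)) - g (b *: ei + x)) - (g (b *: ej + x) - g x));
  first by ring.
by rewrite E1 (addrCA (s *: ei)) E2 /dpart1; ring.
Qed.

(* Both mixed partials at x are limits of the same second difference quotient. *)
Lemma dpart1C g (i j : 'I_d) : smooth g ->
  dpart1 j (dpart1 i g) = dpart1 i (dpart1 j g).
Proof.
move=> sg; apply/funext => x; set ei : V := delta_mx 0 i; set ej : V := delta_mx 0 j.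
suff close e : 0 < e -> `|dpart1 j (dpart1 i g) x - dpart1 i (dpart1 j g) x| <= e.
  by apply/eqP; rewrite -subr_eq0 -normr_le0; apply/ler_addgt0Pr => e /close; rewrite add0r.
move=> e0; have e20 : 0 < e / 2 by rewrite divr_gt0.
have near_x f : smooth f ->
    exists2 r, 0 < r & forall y, `|x - y| < r -> `|f x - f y| < e / 2.
  move=> sf; have /cvgrPdist_lt/(_ _ e20)/nbhs_normP[r r0 fr] :=
    differentiable_continuous (smooth_differentiableT sf x).
  by exists r.
have [r1 r10 H1] := near_x _ (smooth_dpart [:: j; i] sg).
have [r2 r20 H2] := near_x _ (smooth_dpart [:: i; j] sg).
pose c := `|ei| + `|ej| + 1; have c0 : 0 < c by rewrite ltr_wpDl // addr_ge0.
pose r := Num.min r1 r2; have r0 : 0 < r by rewrite lt_min r10 r20.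
pose b := r / c; have b0 : 0 < b by rewrite divr_gt0.
have near_b (s t : R) (u w : V) : 0 < s -> s < b -> 0 < t -> t < b ->
    `|u| + `|w| < c -> `|x - (t *: w + (s *: u + x))| < r.
  move=> s0 sb t0 tb uwc; rewrite addrA opprD addrCA subrr addr0 normrN.
  apply: le_lt_trans (ler_normD _ _) _; rewrite !normrZ !gtr0_norm //.
  apply: (@le_lt_trans _ _ (b * (`|u| + `|w|))).
    by rewrite mulrDr addrC lerD // ler_wpM2r // ltW.
  by rewrite -(divfK (lt0r_neq0 c0) r) -/b ltr_pM2l.
have [s [t [s0 sb t0 tb E1]]] := second_difference i j x sg b0.
have [s' [t' [s0' sb' t0' tb' E2]]] := second_difference j i x sg b0.
have swap : g (b *: ei + (b *: ej + x)) - g (b *: ei + x) - g (b *: ej + x) + g x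
    = g (b *: ej + (b *: ei + x)) - g (b *: ej + x) - g (b *: ei + x) + g x.
  by rewrite (addrCA (b *: ej)); ring.
have E := mulIf (lt0r_neq0 b0) (mulIf (lt0r_neq0 b0) (etrans (esym E1) (etrans swap E2))).
have cij : `|ei| + `|ej| < c by rewrite ltrDl.
have cji : `|ej| + `|ei| < c by rewrite addrC ltrDl.
have rr1 : r <= r1 by rewrite /r ge_min lexx.
have rr2 : r <= r2 by rewrite /r ge_min lexx orbT.
have lt1 := H1 _ (lt_le_trans (near_b _ _ _ _ s0 sb t0 tb cij) rr1).
have lt2 := H2 _ (lt_le_trans (near_b _ _ _ _ s0' sb' t0' tb' cji) rr2).
exact/ltW/(dist_lt_split lt1 lt2 E).
Qed.

Lemma dpart_perm g (u v : seq 'I_d) : smooth g -> perm_eq u v -> dpart u g = dpart v g.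
Proof.
move=> sg; have dpart_move w1 i w2 : dpart (w1 ++ i :: w2) g = dpart (i :: w1 ++ w2) g.
  elim: w1 => [//|j w1 IH] /=; rewrite IH /= dpart1C //.
  exact: smooth_dpart.
elim: u v => [|i u IH] v; first by move/perm_size; case: v.
move=> puv; have iv : i \in v by rewrite -(perm_mem puv) mem_head.
move: puv; case/splitPr: iv => v1 v2 puv.
rewrite dpart_move /= (IH (v1 ++ v2)) // -(perm_cons i); apply: perm_trans puv _.
by rewrite -cat1s perm_catCA.
Qed.

End Schwarz.

Section TaylorPolynomial.
Variables (R : realType) (d : nat) (x0 : 'rV[R]_d).
Local Notation V := 'rV[R]_d.
Implicit Types (a : V -> R) (s u v w : seq 'I_d).

Definition monomial_at s : V -> R := fun y => \prod_(l <- s) (y 0 l - x0 0 l).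

Definition rem_seq u s := foldr (@rem _) s u.

(* [dpart_coef u s] is the integer such that
   [dpart u (monomial_at s) = (dpart_coef u s)%:R \*: monomial_at (rem_seq u s)]. *)
Fixpoint dpart_coef u s : nat :=
  if u is i :: u' then (dpart_coef u' s * count_mem i (rem_seq u' s))%N else 1%N.

Lemma monomial_at_nil : monomial_at [::] = cst 1.
Proof. by apply/funext => y; rewrite /monomial_at big_nil. Qed.

Lemma monomial_at_cons i s :
  monomial_at (i :: s) = (coordf i \+ cst (- x0 0 i)) \* monomial_at s.
Proof. by apply/funext => y; rewrite /monomial_at big_cons. Qed.

Lemma is_poly_monomial_at s : is_poly (monomial_at s).
Proof.
elim: s => [|i s IH]; first by rewrite monomial_at_nil; apply: is_poly_cst.
rewrite monomial_at_cons; apply: is_polyM IH.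
by apply: is_polyD; [apply: is_poly_coordf | apply: is_poly_cst].
Qed.

Lemma monomial_at_perm s s' : perm_eq s s' -> monomial_at s = monomial_at s'.
Proof. by move=> ss'; apply/funext => y; rewrite /monomial_at (perm_big _ ss'). Qed.

Lemma monomial_at_x0 s : monomial_at s x0 = (s == [::])%:R.
Proof.
by case: s => [|i s]; rewrite /monomial_at ?big_nil // big_cons subrr mul0r.
Qed.

Lemma dpart1_monomial_at i s :
  dpart1 i (monomial_at s) = (count_mem i s)%:R \*: monomial_at (rem i s).
Proof.
elim: s => [|j s IH].
  by rewrite monomial_at_nil dpart1_cst; apply/funext => y; rewrite /= scale0r.
have dj : differentiableT (coordf j \+ cst (- x0 0 j) : V -> R).
  by apply: differentiableTD; [apply: differentiableT_coordf | apply: differentiableT_cst].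
rewrite monomial_at_cons dpart1M //; last exact/differentiableT_poly/is_poly_monomial_at.
rewrite dpart1D ?dpart1_coordf ?dpart1_cst; last exact: differentiableT_cst.
  rewrite IH; apply/funext => y; rewrite /= /coordf !scaler_nat.
  case: (eqVneq j i) => [->|ji] /=; last by rewrite /monomial_at big_cons; ring.
  rewrite add1n mulrS; have [ins|nis] := boolP (i \in s).
    by rewrite (monomial_at_perm (perm_to_rem ins)) /monomial_at big_cons; ring.
  by rewrite (count_memPn nis) !mulr0n; ring.
exact: differentiableT_coordf.
Qed.

Lemma dpart_monomial_at u s :
  dpart u (monomial_at s) = (dpart_coef u s)%:R \*: monomial_at (rem_seq u s).
Proof.
elim: u => [|i u IH] /=; first by apply/funext => y; rewrite /= scale1r.
rewrite IH dpart1Z; last exact/differentiableT_poly/is_poly_monomial_at.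
by rewrite dpart1_monomial_at; apply/funext => y; rewrite /= scalerA natrM.
Qed.

Lemma dpart_coef_perm u s : dpart_coef u s != 0%N -> perm_eq s (u ++ rem_seq u s).
Proof.
elim: u => [|i u IH] /=; first by rewrite perm_refl.
rewrite muln_eq0 negb_or => /andP[/IH su iu].
have iru : i \in rem_seq u s by rewrite -has_pred1 has_count lt0n.
apply: perm_trans su _; rewrite perm_sym -cat1s perm_catCA perm_cat2l /= perm_sym.
exact: perm_to_rem.
Qed.

Lemma perm_dpart_coef u s w : perm_eq s (u ++ w) ->
  dpart_coef u s != 0%N /\ perm_eq (rem_seq u s) w.
Proof.
elim: u w => [//|i u IH] w suw /=.
have [cu ruw] : dpart_coef u s != 0%N /\ perm_eq (rem_seq u s) (i :: w).
  apply: IH; apply: perm_trans suw _; rewrite perm_sym.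
  by apply/permPl; apply: (perm_catCA u [:: i] w).
have iru : i \in rem_seq u s by rewrite (perm_mem ruw) mem_head.
split; first by rewrite muln_eq0 negb_or cu -lt0n -has_count has_pred1.
by rewrite -(perm_cons i) (perm_trans _ ruw) // perm_sym perm_to_rem.
Qed.

Lemma dpart_coef_self v : dpart_coef v v != 0%N /\ rem_seq v v = [::].
Proof.
have vv : perm_eq v (v ++ [::]) by rewrite cats0.
by have [cv /perm_size] := perm_dpart_coef vv; case: (rem_seq v v).
Qed.

Fixpoint seqs_upto N : seq (seq 'I_d) :=
  if N is N'.+1 then [::] :: [seq i :: s | i <- enum 'I_d, s <- seqs_upto N']
  else [:: [::]].

Lemma mem_seqs_upto N s : (size s <= N)%N -> s \in seqs_upto N.
Proof.
elim: N s => [|N IH] [|i s] //= sN; rewrite ?mem_head // inE.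
by rewrite (allpairs_f (fun i s => i :: s)) ?orbT ?mem_enum ?IH.
Qed.

Definition sorted_seqs N := undup [seq s <- seqs_upto N | sorted <=%O s].

Lemma mem_sorted_seqs N s : sorted <=%O s -> (size s <= N)%N -> s \in sorted_seqs N.
Proof. by move=> ss sN; rewrite mem_undup mem_filter ss mem_seqs_upto. Qed.

Definition taylor_poly a N : V -> R :=
  \sum_(s <- sorted_seqs N) (dpart s a x0 / (dpart_coef s s)%:R) \*: monomial_at s.

Lemma is_poly_taylor_poly a N : is_poly (taylor_poly a N).
Proof. by apply: is_poly_sum => s; apply/is_polyZ/is_poly_monomial_at. Qed.

(* Since [monomial_at s] vanishes at [x0] unless [s] is empty, the only term
   whose [v]-derivative survives at [x0] is the one indexed by [v] itself. *)
Lemma dpart_taylor_poly_sorted a N v : sorted <=%O v -> (size v <= N)%N ->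
  dpart v (taylor_poly a N) x0 = dpart v a x0.
Proof.
move=> sv vN; have smon s : smooth (monomial_at s) by apply/smooth_poly/is_poly_monomial_at.
rewrite dpart_sum => [|s]; last exact/smoothZ.
rewrite fct_sumE (bigD1_seq v) ?undup_uniq ?mem_sorted_seqs //= big1_seq ?addr0.
  have [cv vv] := dpart_coef_self v.
  rewrite dpartZ // dpart_monomial_at vv /= monomial_at_x0 eqxx.
  by rewrite -[_ *: 1%:R]/(_ * 1) mulr1 -[_ *: _]/(_ * _) mulfVK ?pnatr_eq0.
move=> s /andP[sv' sT]; rewrite dpartZ // dpart_monomial_at /= monomial_at_x0.
suff -> : (dpart_coef v s)%:R *: (rem_seq v s == [::])%:R = 0 :> R by rewrite scaler0.
have [-> | /dpart_coef_perm svr] := eqVneq (dpart_coef v s) 0%N; first by rewrite scale0r.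
case: eqP svr => [-> | _]; last by rewrite /= mulr0n scaler0.
rewrite cats0 => svp; move: sT; rewrite mem_undup mem_filter => /andP[ss _].
by rewrite (sorted_eq le_trans le_anti ss sv svp) eqxx in sv'.
Qed.

Lemma dpart_taylor_poly a N u : smooth a -> (size u <= N)%N ->
  dpart u (taylor_poly a N) x0 = dpart u a x0.
Proof.
move=> sa uN; have uv : perm_eq u (sort <=%O u) by rewrite perm_sym perm_sort.
rewrite !(dpart_perm _ uv) //; last exact/smooth_poly/is_poly_taylor_poly.
by apply: dpart_taylor_poly_sorted; rewrite ?size_sort ?sort_sorted //; apply: le_total.
Qed.

End TaylorPolynomial.

Section BidifferentialJets.
Variables (R : realType) (d : nat).
Local Notation V := 'rV[R]_d.
Local Notation term := (seq 'I_d * seq 'I_d * (V -> R))%type.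

Definition bidiff_order (T : seq term) : nat :=
  \max_(t <- T) maxn (size t.1.1) (size t.1.2).

Lemma eq_bidiff_sum (T : seq term) (F G : term -> R) N : (bidiff_order T <= N)%N ->
    (forall t, (size t.1.1 <= N)%N -> (size t.1.2 <= N)%N -> F t = G t) ->
  \sum_(t <- T) F t = \sum_(t <- T) G t.
Proof.
elim: T => [|t T IH]; rewrite /bidiff_order ?big_nil // !big_cons geq_max => /andP[].
by rewrite geq_max => /andP[t1 t2] TN FG; rewrite FG // IH.
Qed.

Lemma bidiff_eq_poly (P P' : (V -> R) -> (V -> R) -> (V -> R)) :
    bidifferential P -> bidifferential P' ->
    (forall p q, is_poly p -> is_poly q -> P p q = P' p q) ->
  forall a b, smooth a -> smooth b -> P a b = P' a b.
Proof.
move=> [T [_ PT]] [T' [_ PT']] PP' a b sa sb; apply/funext => x.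
pose N := maxn (bidiff_order T) (bidiff_order T').
have [pa pb] := (is_poly_taylor_poly x a N, is_poly_taylor_poly x b N).
have [spa spb] := (smooth_poly pa, smooth_poly pb).
have jet_eq (S : seq term) : (bidiff_order S <= N)%N ->
    \sum_(t <- S) t.2 x * dpart t.1.1 a x * dpart t.1.2 b x
  = \sum_(t <- S) t.2 x * dpart t.1.1 (taylor_poly x a N) x
                        * dpart t.1.2 (taylor_poly x b N) x.
  by move=> SN; apply: eq_bidiff_sum SN _ => t t1 t2; rewrite !dpart_taylor_poly.
rewrite PT // PT' // jet_eq ?leq_maxl // jet_eq ?leq_maxr //.
by have := congr1 (fun F => F x) (PP' _ _ pa pb); rewrite /= PT // PT'.
Qed.

End BidifferentialJets.

Theorem theorem2p1p3 (R : realType) (d : nat)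
    (c : 'I_d -> 'I_d -> 'I_d -> R)
    (Pi Pi' : nat -> ('rV[R]_d -> R) -> ('rV[R]_d -> R) -> ('rV[R]_d -> R)) :
  is_lie_structure c ->
  is_star_product c Pi -> P1 Pi ->
  is_star_product c Pi' -> P1 Pi' ->
  (forall (X Y : 'rV[R]_d) (n : nat),
      star Pi (cst_series (powf X n)) (cst_series (linf Y))
      = star Pi' (cst_series (powf X n)) (cst_series (linf Y))) ->
  forall a b : epsseries R d, smooth_series a -> smooth_series b ->
    star Pi a b = star Pi' a b.
Proof.
move=> _ [bid Pi0 _ assoc] P1Pi [bid' Pi0' _ assoc'] P1Pi' eqXY a b sa sb.
apply/funext => n; apply/funext => x; apply: eq_bigr => j _; apply: eq_bigr => i _.
rewrite (bidiff_eq_poly (bid j) (bid' j)) // => p q pp pq.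
exact: (Pi_poly_eq bid Pi0 assoc P1Pi bid' Pi0' assoc' P1Pi' eqXY).
Qed.
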